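(* Let $I$ be a non-degenerate interval, $f:I\to\mathbb{R}$ continuous and $c\ge1$. (i) If the graph of $f$ is $c$-monotone, then $f$ satisfies condition $\mathsf{P}_c$. (ii) If $f$ satisfies condition $\mathsf{P}_{c-1}$, then the graph of $f$ is symmetrically $c$-monotone.
   Context: For $a\ge0$, $f$ satisfies condition $\mathsf{P}_a$ if $\max_{x\le t\le y}|f(x)-f(t)|\le a|x-y|$ whenever $x<y$ in $I$ and $f(x)=f(y)$. A metric space $(X,d)$ is $c$-monotone if there is a linear order $<$ with $d(x,y)\le c\,d(x,z)$ whenever $x<y<z$, and symmetrically $c$-monotone if there is a linear order $<$ with $\max(d(x,y),d(y,z))\le c\,d(x,z)$ whenever $x<y<z$. The graph $\{(x,f(x)):x\in I\}$ carries the Euclidean metric. *)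

From Stdlib Require Import Reals Lra.
Open Scope R_scope.

Definition is_interval (I : R -> Prop) : Prop :=
  forall x y t, I x -> I y -> x <= t <= y -> I t.

Definition nondegenerate (I : R -> Prop) : Prop :=
  exists a b, I a /\ I b /\ a < b.

Definition continuous_on (I : R -> Prop) (f : R -> R) : Prop :=
  forall x, I x -> forall eps, 0 < eps ->
    exists delta, 0 < delta /\
      forall y, I y -> Rabs (y - x) < delta -> Rabs (f y - f x) < eps.

(* Condition P_a: the max over [x,y] of |f x - f t| is <= a |x - y|,
   written as a bound on every t in [x,y]. *)
Definition cond_P (I : R -> Prop) (f : R -> R) (a : R) : Prop :=
  forall x y, I x -> I y -> x < y -> f x = f y ->
    forall t, x <= t <= y -> Rabs (f x - f t) <= a * Rabs (x - y).

Definition dist2 (p q : R * R) : R :=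
  sqrt ((fst p - fst q) ^ 2 + (snd p - snd q) ^ 2).

Definition graph (I : R -> Prop) (f : R -> R) (p : R * R) : Prop :=
  exists x, I x /\ p = (x, f x).

Definition strict_linear_order_on {T : Type} (X : T -> Prop) (lt : T -> T -> Prop) : Prop :=
  (forall x, X x -> ~ lt x x) /\
  (forall x y z, X x -> X y -> X z -> lt x y -> lt y z -> lt x z) /\
  (forall x y, X x -> X y -> x <> y -> lt x y \/ lt y x).

Definition c_monotone (X : R * R -> Prop) (c : R) : Prop :=
  exists lt, strict_linear_order_on X lt /\
    forall x y z, X x -> X y -> X z -> lt x y -> lt y z ->
      dist2 x y <= c * dist2 x z.

Definition sym_c_monotone (X : R * R -> Prop) (c : R) : Prop :=
  exists lt, strict_linear_order_on X lt /\
    forall x y z, X x -> X y -> X z -> lt x y -> lt y z ->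
      Rmax (dist2 x y) (dist2 y z) <= c * dist2 x z.

From Stdlib Require Import Reals Lra Classical.
From Coquelicot Require Hierarchy.
Open Scope R_scope.

(* (i) Let x < t < y with f x = f y.  The arc of the graph over [t, y] avoids
   (x, f x) and the arc over [x, t] avoids (y, f y).  A continuous arc cannot
   cross a point m of a c-monotone order, because p < m < q forces
   dist(p, m) <= c dist(p, q).  So (t, f t) lies between the two end points in
   the order, and |f x - f t| <= dist((x, f x), (t, f t)) <= c |x - y|.

   (ii) Order the graph by abscissa and let x < y < z.  One of f x, f y, f z
   lies between the other two.  If it is an outer value v, the intermediate
   value theorem yields a second point of level v on the far side of y, and
   P_(c-1) gives |f y - v| <= (c - 1)(z - x).  The point (y, v) is no farther
   than dist((x, f x), (z, f z)) from either outer point. *)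

Lemma dist2_sym p q : dist2 p q = dist2 q p.
Proof. unfold dist2. f_equal. ring. Qed.

Section EuclideanTriangle.
Import Hierarchy.

(* [dist2 p q] is the norm of [minus p q] in Coquelicot's product normed module. *)
Lemma dist2_triangle p q r : dist2 p r <= dist2 p q + dist2 q r.
Proof.
  assert (hnorm : forall p q, dist2 p q =
            prod_norm (U := R_NormedModule) (V := R_NormedModule) (minus p q)).
  { intros p' q'. unfold dist2.
    rewrite <- (pow2_abs (fst p' - fst q')), <- (pow2_abs (snd p' - snd q')).
    reflexivity. }
  rewrite !hnorm, (minus_trans q p r). exact (prod_norm_triangle _ _).
Qed.

End EuclideanTriangle.

Lemma Rabs_fst_le_dist2 p q : Rabs (fst p - fst q) <= dist2 p q.
Proof.
  pose proof (Hierarchy.sqrt_plus_sqr (fst p - fst q) (snd p - snd q)) as [h _].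
  pose proof (Rmax_l (Rabs (fst p - fst q)) (Rabs (snd p - snd q))).
  unfold dist2. lra.
Qed.

Lemma Rabs_snd_le_dist2 p q : Rabs (snd p - snd q) <= dist2 p q.
Proof.
  pose proof (Hierarchy.sqrt_plus_sqr (fst p - fst q) (snd p - snd q)) as [h _].
  pose proof (Rmax_r (Rabs (fst p - fst q)) (Rabs (snd p - snd q))).
  unfold dist2. lra.
Qed.

Lemma dist2_same_fst x u v : dist2 (x, u) (x, v) = Rabs (u - v).
Proof.
  unfold dist2; simpl. rewrite <- sqrt_Rsqr_abs. f_equal. unfold Rsqr. ring.
Qed.

Lemma dist2_same_snd x y u : dist2 (x, u) (y, u) = Rabs (x - y).
Proof.
  unfold dist2; simpl. rewrite <- sqrt_Rsqr_abs. f_equal. unfold Rsqr. ring.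
Qed.

Lemma dist2_le_Rabs_add p q : dist2 p q <= Rabs (fst p - fst q) + Rabs (snd p - snd q).
Proof.
  destruct p as [x u], q as [y v]; simpl.
  rewrite <- dist2_same_snd with (u := u), <- dist2_same_fst with (x := y).
  apply dist2_triangle.
Qed.

Lemma dist2_pos p q : p <> q -> 0 < dist2 p q.
Proof.
  destruct p as [x u], q as [y v]; intro hne.
  pose proof (Rabs_fst_le_dist2 (x, u) (y, v)); pose proof (Rabs_snd_le_dist2 (x, u) (y, v)).
  simpl in *. destruct (Req_dec x y) as [->|hxy].
  - assert (u <> v) by congruence. pose proof (Rabs_pos_lt (u - v) ltac:(lra)). lra.
  - pose proof (Rabs_pos_lt (x - y) ltac:(lra)). lra.
Qed.

Lemma dist2_le_compat p q p' q' :
  Rabs (fst p - fst q) <= Rabs (fst p' - fst q') ->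
  Rabs (snd p - snd q) <= Rabs (snd p' - snd q') -> dist2 p q <= dist2 p' q'.
Proof.
  intros h1 h2. apply sqrt_le_1_alt.
  rewrite <- (pow2_abs (fst p - fst q)), <- (pow2_abs (snd p - snd q)),
    <- (pow2_abs (fst p' - fst q')), <- (pow2_abs (snd p' - snd q')).
  pose proof (Rabs_pos (fst p - fst q)); pose proof (Rabs_pos (snd p - snd q)). nra.
Qed.

Definition between (u v w : R) : Prop := u <= v <= w \/ w <= v <= u.

Definition adherent (A : R -> Prop) (x : R) : Prop :=
  forall d, 0 < d -> exists u, A u /\ Rabs (u - x) < d.

(* Connectedness of [a, b]: the supremum of the [A]-part is adherent to both parts. *)
Lemma interval_cover_common_adherent (A B : R -> Prop) a b :
  a <= b -> (forall u, a <= u <= b -> A u \/ B u) -> A a -> B b ->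
  exists x, a <= x <= b /\ adherent A x /\ adherent B x.
Proof.
  intros hab hcover ha hb.
  set (E := fun u => a <= u <= b /\ A u).
  assert (hbound : bound E) by (exists b; intros u [[_ hu] _]; exact hu).
  destruct (completeness E hbound (ex_intro E a (conj (conj (Rle_refl a) hab) ha)))
    as [x [hub hlub]].
  assert (hx : a <= x <= b).
  { split; [apply hub; split; [lra | exact ha] |].
    apply hlub. intros u [[_ hu] _]. exact hu. }
  exists x; repeat split; try lra.
  - intros d hd. apply NNPP. intro hnone.
    assert (x <= x - d); [| lra].
    apply hlub. intros u hu. apply Rnot_lt_le. intro hlt.
    apply hnone. exists u. split; [exact (proj2 hu) |].
    pose proof (hub u hu). rewrite Rabs_left1; lra.
  - intros d hd. destruct (Req_dec x b) as [-> | hxb].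
    + exists b. rewrite Rminus_diag, Rabs_R0. auto.
    + set (u := Rmin b (x + d / 2)).
      assert (hu : x < u <= b) by (unfold u, Rmin; destruct Rle_dec; lra).
      assert (hau : a <= u <= b) by lra.
      exists u. split.
      * destruct (hcover u hau) as [hA | hB]; [| exact hB].
        pose proof (hub u (conj hau hA)). lra.
      * rewrite Rabs_right by lra. unfold u, Rmin in *; destruct Rle_dec; lra.
Qed.

Lemma continuous_on_ivt (I : R -> Prop) (f : R -> R) a b v :
  is_interval I -> continuous_on I f -> I a -> I b -> a <= b ->
  between (f a) v (f b) -> exists x, a <= x <= b /\ f x = v.
Proof.
  intros hI hf ha hb hab hv.
  set (A := fun u => a <= u <= b /\ f u <= v).
  set (B := fun u => a <= u <= b /\ v <= f u).
  assert (hcover : forall u, a <= u <= b -> A u \/ B u)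
    by (intros u hu; unfold A, B; lra).
  assert (hx : exists x, a <= x <= b /\ adherent A x /\ adherent B x).
  { destruct hv as [hv | hv].
    - apply interval_cover_common_adherent; unfold A, B; auto; lra.
    - destruct (interval_cover_common_adherent B A a b) as [x [hx [hB hA]]];
        unfold A, B; auto; try lra.
      + intros u hu; apply or_comm, hcover, hu.
      + exists x; auto. }
  destruct hx as [x [hx [hA hB]]].
  exists x. split; [exact hx |].
  assert (hIab : forall u, a <= u <= b -> I u) by (intros u hu; apply (hI a b); auto).
  apply Rle_antisym; apply Rle_plus_epsilon; intros eps heps;
    destruct (hf x (hIab x hx) eps heps) as [d [hd hcont]].
  - destruct (hA d hd) as [u [[hu hfu] hux]].
    specialize (hcont u (hIab u hu) hux). apply Rabs_def2 in hcont. lra.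
  - destruct (hB d hd) as [u [[hu hfu] hux]].
    specialize (hcont u (hIab u hu) hux). apply Rabs_def2 in hcont. lra.
Qed.

Definition path_continuous_on (J : R -> Prop) (g : R -> R * R) : Prop :=
  forall s, J s -> forall eps, 0 < eps -> exists delta, 0 < delta /\
    forall u, J u -> Rabs (u - s) < delta -> dist2 (g u) (g s) < eps.

Lemma graph_path_continuous (I : R -> Prop) (f : R -> R) :
  continuous_on I f -> path_continuous_on I (fun s => (s, f s)).
Proof.
  intros hf s hs eps heps.
  destruct (hf s hs (eps / 2)) as [d [hd hcont]]; [lra |].
  exists (Rmin d (eps / 2)). split; [apply Rmin_glb_lt; lra |].
  intros u hu hus.
  pose proof (Rmin_l d (eps / 2)); pose proof (Rmin_r d (eps / 2)).
  specialize (hcont u hu ltac:(lra)).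
  pose proof (dist2_le_Rabs_add (u, f u) (s, f s)); simpl in *. lra.
Qed.

Section MonotonePath.

Variables (X : R * R -> Prop) (lt : R * R -> R * R -> Prop) (c : R).
Hypothesis c_ge0 : 0 <= c.
Hypothesis lt_total : forall p q, X p -> X q -> p <> q -> lt p q \/ lt q p.
Hypothesis lt_monotone : forall p q r, X p -> X q -> X r -> lt p q -> lt q r ->
  dist2 p q <= c * dist2 p r.

(* Near a crossing parameter [x] there are [p < m < q] both close to [g x];
   then [dist2 p m <= c * dist2 p q] forces [g x] to be close to [m]. *)
Lemma monotone_path_no_crossing (J : R -> Prop) (g : R -> R * R) m a b :
  is_interval J -> path_continuous_on J g -> J a -> J b -> X m ->
  (forall s, a <= s <= b -> X (g s) /\ g s <> m) ->
  forall s s', a <= s <= b -> a <= s' <= b -> lt (g s) m -> lt m (g s') -> False.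
Proof.
  intros hJ hg ha hb hm hpath s s' hs hs' hbelow habove.
  set (A := fun u => a <= u <= b /\ lt (g u) m).
  set (B := fun u => a <= u <= b /\ lt m (g u)).
  assert (hcover : forall u, a <= u <= b -> A u \/ B u).
  { intros u hu. destruct (hpath u hu) as [hXu hum].
    destruct (lt_total (g u) m hXu hm hum); [left | right]; split; auto. }
  assert (hx : exists x, a <= x <= b /\ adherent A x /\ adherent B x).
  { destruct (Rle_dec s s') as [hle | hgt].
    - destruct (interval_cover_common_adherent A B s s') as [x [hx hAB]];
        unfold A, B; auto.
      + intros u hu; apply hcover; lra.
      + exists x; split; auto; lra.
    - destruct (interval_cover_common_adherent B A s' s) as [x [hx [hB hA]]];
        unfold A, B; auto; try lra.
      + intros u hu; apply or_comm, hcover; lra.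
      + exists x; repeat split; auto; lra. }
  destruct hx as [x [hx [hA hB]]].
  assert (hJab : forall u, a <= u <= b -> J u) by (intros u hu; apply (hJ a b); auto).
  set (r := dist2 (g x) m).
  assert (hr : 0 < r) by (apply dist2_pos, hpath, hx).
  set (eta := r / (2 * c + 1)).
  assert (heta : 0 < eta) by (apply Rdiv_lt_0_compat; lra).
  assert (hr_eta : r = eta + 2 * c * eta) by (unfold eta; field; lra).
  destruct (hg x (hJab x hx) eta heta) as [d [hd hcont]].
  destruct (hA d hd) as [u [[hu hlow] hux]].
  destruct (hB d hd) as [u' [[hu' hhigh] hu'x]].
  pose proof (hcont u (hJab u hu) hux) as hgu.
  pose proof (hcont u' (hJab u' hu') hu'x) as hgu'.
  pose proof (lt_monotone _ _ _ (proj1 (hpath u hu)) hm (proj1 (hpath u' hu'))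
    hlow hhigh) as hmono.
  pose proof (dist2_triangle (g u) (g x) (g u')) as htri.
  pose proof (dist2_triangle (g x) (g u) m) as htri'.
  rewrite (dist2_sym (g x) (g u')) in htri. rewrite (dist2_sym (g x) (g u)) in htri'.
  fold r in htri'.
  assert (c * dist2 (g u) (g u') <= c * (2 * eta)) by (apply Rmult_le_compat_l; lra).
  lra.
Qed.

End MonotonePath.

Section Graph.

Variables (I : R -> Prop) (f : R -> R).
Hypotheses (I_interval : is_interval I) (f_continuous : continuous_on I f).

Let g (s : R) : R * R := (s, f s).

Lemma graph_point s : I s -> graph I f (g s).
Proof. intro hs. exists s. auto. Qed.

Lemma graph_point_inj s s' : s <> s' -> g s <> g s'.
Proof. intros hne heq. apply hne. injection heq. auto. Qed.

Lemma monotone_graph_between c lt x t y :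
  0 <= c -> strict_linear_order_on (graph I f) lt ->
  (forall p q r, graph I f p -> graph I f q -> graph I f r -> lt p q -> lt q r ->
     dist2 p q <= c * dist2 p r) ->
  I x -> I y -> x < t < y ->
  (lt (g x) (g t) /\ lt (g t) (g y)) \/ (lt (g y) (g t) /\ lt (g t) (g x)).
Proof.
  intros hc [_ [_ htot]] hmono hx hy hxty.
  assert (hIxy : forall s, x <= s <= y -> I s) by (intros s hs; apply (I_interval x y); auto).
  assert (hG : forall s, x <= s <= y -> graph I f (g s))
    by (intros s hs; apply graph_point, hIxy, hs).
  assert (hcross : forall m a b s s', x <= m <= y -> x <= a <= b -> b <= y ->
            ~ (a <= m <= b) -> a <= s <= b -> a <= s' <= b ->
            lt (g s) (g m) -> lt (g m) (g s') -> False).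
  { intros m a b s s' hm ha hb hmab.
    apply (monotone_path_no_crossing (graph I f) lt c hc htot hmono I g); auto.
    - exact (graph_path_continuous I f f_continuous).
    - apply hIxy; lra.
    - apply hIxy; lra.
    - intros u hu. split; [apply hG; lra | apply graph_point_inj; lra]. }
  assert (hneq : forall s s', x <= s <= y -> x <= s' <= y -> s <> s' ->
            lt (g s) (g s') \/ lt (g s') (g s))
    by (intros s s' hs hs' hne; apply htot; auto using graph_point_inj).
  destruct (hneq x y ltac:(lra) ltac:(lra) ltac:(lra)) as [hxy | hyx].
  - left. split.
    + destruct (hneq x t ltac:(lra) ltac:(lra) ltac:(lra)) as [| htx]; auto.
      exfalso. apply (hcross x t y t y); auto; lra.
    + destruct (hneq t y ltac:(lra) ltac:(lra) ltac:(lra)) as [| hyt]; auto.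
      exfalso. apply (hcross y x t x t); auto; lra.
  - right. split.
    + destruct (hneq y t ltac:(lra) ltac:(lra) ltac:(lra)) as [| hty]; auto.
      exfalso. apply (hcross y x t t x); auto; lra.
    + destruct (hneq t x ltac:(lra) ltac:(lra) ltac:(lra)) as [| hxt]; auto.
      exfalso. apply (hcross x t y y t); auto; lra.
Qed.

Lemma c_monotone_graph_cond_P c : 0 <= c -> c_monotone (graph I f) c -> cond_P I f c.
Proof.
  intros hc [lt [hord hmono]] x y hx hy hxy hfxy t ht.
  assert (hdist : dist2 (g x) (g y) = Rabs (x - y))
    by (unfold g; rewrite hfxy; apply dist2_same_snd).
  assert (hbound : 0 <= c * Rabs (x - y)) by (apply Rmult_le_pos; auto using Rabs_pos).
  destruct (Req_dec t x) as [-> | htx].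
  { rewrite Rminus_diag, Rabs_R0. exact hbound. }
  destruct (Req_dec t y) as [-> | hty].
  { rewrite hfxy, Rminus_diag, Rabs_R0. exact hbound. }
  assert (hIt : I t) by (apply (I_interval x y); auto).
  destruct (monotone_graph_between c lt x t y) as [[hxt hty'] | [hyt htx']];
    auto; try lra.
  - pose proof (Rabs_snd_le_dist2 (g x) (g t)) as hft.
    pose proof (hmono _ _ _ (graph_point x hx) (graph_point t hIt) (graph_point y hy)
      hxt hty') as hmid.
    rewrite hdist in hmid. simpl in hft. lra.
  - pose proof (Rabs_snd_le_dist2 (g y) (g t)) as hft.
    pose proof (hmono _ _ _ (graph_point y hy) (graph_point t hIt) (graph_point x hx)
      hyt htx') as hmid.
    rewrite (dist2_sym (g y) (g x)), hdist in hmid. simpl in hft. rewrite hfxy. lra.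
Qed.

Lemma cond_P_level_left a x y z : cond_P I f a -> 0 <= a ->
  I x -> I z -> x < y <= z -> between (f y) (f x) (f z) ->
  Rabs (f y - f x) <= a * (z - x).
Proof.
  intros hP ha hx hz hxyz hlevel.
  assert (hy : I y) by (apply (I_interval x z); auto; lra).
  destruct (continuous_on_ivt I f y z (f x)) as [s [hs hfs]]; auto; try lra.
  assert (hIs : I s) by (apply (I_interval y z); auto).
  pose proof (hP x s hx hIs ltac:(lra) (eq_sym hfs) y ltac:(lra)) as hbound.
  rewrite Rabs_minus_sym, (Rabs_left (x - s)) in hbound by lra.
  assert (a * - (x - s) <= a * (z - x)) by (apply Rmult_le_compat_l; lra).
  lra.
Qed.

Lemma cond_P_level_right a x y z : cond_P I f a -> 0 <= a ->
  I x -> I z -> x <= y < z -> between (f x) (f z) (f y) ->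
  Rabs (f y - f z) <= a * (z - x).
Proof.
  intros hP ha hx hz hxyz hlevel.
  assert (hy : I y) by (apply (I_interval x z); auto; lra).
  destruct (continuous_on_ivt I f x y (f z)) as [s [hs hfs]]; auto; try lra.
  assert (hIs : I s) by (apply (I_interval x y); auto).
  pose proof (hP s z hIs hz ltac:(lra) hfs y ltac:(lra)) as hbound.
  rewrite hfs, Rabs_minus_sym, (Rabs_left (s - z)) in hbound by lra.
  assert (a * - (s - z) <= a * (z - x)) by (apply Rmult_le_compat_l; lra).
  lra.
Qed.

End Graph.

Lemma sym_monotone_triple x y z fx fy fz v c :
  x <= y <= z -> 1 <= c -> between fx v fz -> Rabs (fy - v) <= (c - 1) * (z - x) ->
  Rmax (dist2 (x, fx) (y, fy)) (dist2 (y, fy) (z, fz)) <= c * dist2 (x, fx) (z, fz).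
Proof.
  intros hxyz hc hv hfy.
  set (D := dist2 (x, fx) (z, fz)).
  assert (hD : z - x <= D).
  { pose proof (Rabs_fst_le_dist2 (x, fx) (z, fz)) as h. simpl in h.
    rewrite Rabs_left1 in h by lra. unfold D. lra. }
  assert (hleft : dist2 (x, fx) (y, v) <= D)
    by (apply dist2_le_compat; simpl; unfold between in hv; split_Rabs; lra).
  assert (hright : dist2 (y, v) (z, fz) <= D)
    by (apply dist2_le_compat; simpl; unfold between in hv; split_Rabs; lra).
  assert (hvert : dist2 (y, v) (y, fy) = Rabs (fy - v))
    by (rewrite dist2_same_fst; apply Rabs_minus_sym).
  assert (hcorr : (c - 1) * (z - x) <= (c - 1) * D) by (apply Rmult_le_compat_l; lra).
  pose proof (dist2_triangle (x, fx) (y, v) (y, fy)) as htri_left.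
  pose proof (dist2_triangle (y, fy) (y, v) (z, fz)) as htri_right.
  rewrite (dist2_sym (y, fy) (y, v)) in htri_right.
  apply Rmax_lub; lra.
Qed.

Lemma between_cases u v w : between u v w \/ between v u w \/ between u w v.
Proof. unfold between. lra. Qed.

Lemma cond_P_graph_sym_c_monotone (I : R -> Prop) (f : R -> R) c :
  is_interval I -> continuous_on I f -> 1 <= c ->
  cond_P I f (c - 1) -> sym_c_monotone (graph I f) c.
Proof.
  intros hI hf hc hP. exists (fun p q => fst p < fst q). split.
  { split; [| split]; [intros; lra | intros; lra |].
    intros p q [x [_ ->]] [y [_ ->]] hne; simpl.
    destruct (Rtotal_order x y) as [| [-> |]]; auto. contradiction. }
  intros p q r [x [hx ->]] [y [_ ->]] [z [hz ->]]; simpl; intros hxy hyz.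
  destruct (between_cases (f x) (f y) (f z)) as [hmid | [hleft | hright]].
  - apply (sym_monotone_triple x y z (f x) (f y) (f z) (f y)); auto; try lra.
    rewrite Rminus_diag, Rabs_R0. apply Rmult_le_pos; lra.
  - apply (sym_monotone_triple x y z (f x) (f y) (f z) (f x)); try lra.
    + unfold between in *; lra.
    + apply (cond_P_level_left I f hI hf); auto; lra.
  - apply (sym_monotone_triple x y z (f x) (f y) (f z) (f z)); try lra.
    + unfold between in *; lra.
    + apply (cond_P_level_right I f hI hf); auto; lra.
Qed.

Theorem lemma2p3 (I : R -> Prop) (f : R -> R) (c : R) :
  is_interval I -> nondegenerate I -> continuous_on I f -> 1 <= c ->
  (c_monotone (graph I f) c -> cond_P I f c) /\
  (cond_P I f (c - 1) -> sym_c_monotone (graph I f) c).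
Proof.
  intros hI _ hf hc. split.
  - apply c_monotone_graph_cond_P; auto; lra.
  - apply cond_P_graph_sym_c_monotone; auto.
Qed.
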